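(* Consider the multi-scenario problem and the consensus-ADMM iteration described in the context, and let $\dot{z}$ be the optimal value of the original (non-decomposed) problem. For each iteration $\nu\ge 0$ and each scenario pair $(\gamma,k)$ define $$D^{\nu}_{\gamma k}=\max_{x\in\mathcal{Q}_{\gamma k}}\sum_{t\in\mathcal{T}}\Big(c_{t\gamma k}^{\top}x_t-(\mu^{\nu}_{t\gamma k})^{\top}X_t\Big),$$ where $X_t$ is the investment sub-vector of $x_t$. Then at every iteration $\nu$, $$\text{GUB}^{\nu}:=\sum_{\gamma\in\mathcal{G}}\sum_{k\in\mathcal{K}}\pi^{\text{LT}}_\gamma\pi^{\text{MS}}_k\,D^{\nu}_{\gamma k}\;\ge\;\dot{z}.$$
   Context: Setting. $\mathcal{T}$ is a finite set of time stages; $\mathcal{G}$ is a finite set of long-term scenarios with probabilities $\pi^{\text{LT}}_\gamma>0$, $\sum_{\gamma}\pi^{\text{LT}}_\gamma=1$; $\mathcal{K}$ is a finite set of short-term (market) scenarios with probabilities $\pi^{\text{MS}}_k>0$, $\sum_k\pi^{\text{MS}}_k=1$. For each stage $t$, $\mathcal{P}_t$ is a partition of $\mathcal{G}$ into nodes of the long-term scenario tree at stage $t$. For each scenario pair $(\gamma,k)$ there is a decision vector $x_{\gamma k}=(x_{t\gamma k})_{t\in\mathcal{T}}$ constrained to a (possibly non-convex, e.g. mixed-integer) feasible set $\mathcal{Q}_{\gamma k}$, and cost vectors $c_{t\gamma k}$; each $x_{t\gamma k}$ contains a sub-vector of investment decisions $X_{t\gamma k}$. The maxima defining $D^\nu_{\gamma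 k}$ are assumed to be attained. The original problem is: maximize $\sum_{\gamma}\sum_{k}\pi^{\text{LT}}_\gamma\pi^{\text{MS}}_k\sum_{t}c_{t\gamma k}^{\top}x_{t\gamma k}$ subject to $x_{\gamma k}\in\mathcal{Q}_{\gamma k}$ for all $(\gamma,k)$ and the non-anticipativity conditions $X_{t\gamma k}=X_{t\gamma' k'}$ for all $t$, all $k,k'\in\mathcal{K}$ and all $\gamma,\gamma'$ in the same node of $\mathcal{P}_t$; $\dot z$ is its optimal value (attained). (In the paper this is the single-level MILP reformulation of a bilevel multi-stage strategic generation investment problem.) Consensus-ADMM iteration with penalty $\rho>0$, dual variables initialized by $\mu^{-1}_{t\gamma k}=0$ and some initial $X^{-1}_{t\gamma k}$: at iteration $\nu=0,1,2,\dots$: (i) for each $(\gamma,k)$, $X^{\nu}_{\cdot\gamma k}$ is the investment part of a maximizer over $x\in\mathcal{Q}_{\gamma k}$ of $\sum_{t}\big(c_{t\gamma k}^{\top}x_t-(\mu^{\nu-1}_{t\gamma k})^{\top}X_t-\tfrac{\rho}{2}\|X_t-X^{\nu-1}_{t\gamma k}\|_2^2\big)$; (ii) for each $t$ and $(\gamma,k)$ with $\gamma$ in node $N\in\mathcal{P}_t$, $\overline{X}^{\nu}_{t\gamma k}=\dfrac{\sum_{\gamma'\in N,k'\in\mathcal{K}}\pi^{\text{LT}}_{\gamma'}\pi^{\text{MS}}_{k'}X^{\nu}_{t\gamma'k'}}{\sum_{\gamma'\in N,k'\in\mathcal{K}}\pi^{\text{LT}}_{\gamma'}\pi^{\text{MS}}_{k'}}$;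 (iii) $\mu^{\nu}_{t\gamma k}=\mu^{\nu-1}_{t\gamma k}+\rho\,(X^{\nu}_{t\gamma k}-\overline{X}^{\nu}_{t\gamma k})$. *)

From HB Require Import structures.
From mathcomp Require Import all_boot all_order all_algebra.
Set Implicit Arguments. Unset Strict Implicit. Unset Printing Implicit Defensive.
Import Order.TTheory GRing.Theory Num.Theory.
Local Open Scope ring_scope.

Definition dotv {R : comRingType} {n : nat} (u v : 'rV[R]_n) : R :=
  \sum_(i < n) u 0 i * v 0 i.

Definition invest {R : comRingType} {n m : nat} (sel : 'I_m -> 'I_n)
  (x : 'rV[R]_n) : 'rV[R]_m := \row_(i < m) x 0 (sel i).

Definition decision (R : comRingType) (T : finType) (n : T -> nat) :=
  forall t : T, 'rV[R]_(n t).

Definition xbar {R : fieldType} {T G K : finType} {m : T -> nat}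
  (P : T -> {set {set G}}) (piLT : G -> R) (piMS : K -> R)
  (X : forall t : T, G -> K -> 'rV[R]_(m t)) (t : T) (g : G) : 'rV[R]_(m t) :=
  (\sum_(g' in pblock (P t) g) \sum_(k' : K) piLT g' * piMS k')^-1 *:
  (\sum_(g' in pblock (P t) g) \sum_(k' : K) (piLT g' * piMS k') *: X t g' k').

(* Dual variables. Index shift: Xs 0 = X^{-1} (initial), Xs nu.+1 = X^nu;
   mu_seq 0 = mu^{-1} = 0, mu_seq nu.+1 = mu^nu (step (iii)). *)
Fixpoint mu_seq {R : fieldType} {T G K : finType} {m : T -> nat}
  (P : T -> {set {set G}}) (piLT : G -> R) (piMS : K -> R) (rho : R)
  (Xs : nat -> forall t : T, G -> K -> 'rV[R]_(m t)) (nu : nat)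
  : forall t : T, G -> K -> 'rV[R]_(m t) :=
  match nu with
  | 0 => fun t g k => 0
  | nu'.+1 => fun t g k =>
      mu_seq P piLT piMS rho Xs nu' t g k
      + rho *: (Xs nu'.+1 t g k - xbar P piLT piMS (Xs nu'.+1) t g)
  end.

Definition lagr_obj {R : comRingType} {T : finType} {n m : T -> nat}
  (sel : forall t, 'I_(m t) -> 'I_(n t))
  (c : forall t, 'rV[R]_(n t)) (mu : forall t, 'rV[R]_(m t))
  (x : decision R n) : R :=
  \sum_(t : T) (dotv (c t) (x t) - dotv (mu t) (invest (sel t) (x t))).

Definition aug_obj {R : fieldType} {T : finType} {n m : T -> nat}
  (sel : forall t, 'I_(m t) -> 'I_(n t)) (rho : R)
  (c : forall t, 'rV[R]_(n t)) (mu : forall t, 'rV[R]_(m t))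
  (Xprev : forall t, 'rV[R]_(m t)) (x : decision R n) : R :=
  \sum_(t : T) (dotv (c t) (x t) - dotv (mu t) (invest (sel t) (x t))
     - rho / 2%:R * dotv (invest (sel t) (x t) - Xprev t)
                         (invest (sel t) (x t) - Xprev t)).

Definition orig_obj {R : comRingType} {T G K : finType} {n : T -> nat}
  (piLT : G -> R) (piMS : K -> R) (c : forall t, G -> K -> 'rV[R]_(n t))
  (x : G -> K -> decision R n) : R :=
  \sum_(g : G) \sum_(k : K) piLT g * piMS k * \sum_(t : T) dotv (c t g k) (x g k t).

Definition orig_feasible {R : comRingType} {T G K : finType} {n m : T -> nat}
  (sel : forall t, 'I_(m t) -> 'I_(n t)) (P : T -> {set {set G}})
  (Q : G -> K -> decision R n -> Prop) (x : G -> K -> decision R n) : Prop :=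
  (forall g k, Q g k (x g k)) /\
  (forall (t : T) (g g' : G) (k k' : K), g' \in pblock (P t) g ->
      invest (sel t) (x g k t) = invest (sel t) (x g' k' t)).

From HB Require Import structures.
From mathcomp Require Import all_boot all_order all_algebra.

Set Implicit Arguments.
Unset Strict Implicit.
Unset Printing Implicit Defensive.
Import Order.TTheory GRing.Theory Num.Theory.
Local Open Scope ring_scope.

(* Weak Lagrangian duality.  Step (iii) only ever adds to mu multiples of the
   deviations of the X from their node-wise probability-weighted mean, and such
   deviations have weighted sum zero; so, starting from mu = 0, the weighted sum
   of the mu over every node of every stage vanishes.  For a non-anticipative
   feasible x the investments are constant on nodes, hence the penalty terms
   sum_{g,k} pi_g pi_k mu_{tgk}.X_{tgk} cancel and the original objective of x
   is the weighted sum of the Lagrangian objectives, each bounded by D. *)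

Section DotProduct.
Variables (R : comRingType) (n : nat).

Lemma dotvZl (a : R) (u v : 'rV[R]_n) : dotv (a *: u) v = a * dotv u v.
Proof. by rewrite /dotv big_distrr; apply: eq_bigr => i _; rewrite mxE -mulrA. Qed.

Lemma dotv_suml (I : Type) (r : seq I) (p : pred I) (u : I -> 'rV[R]_n)
    (v : 'rV[R]_n) :
  dotv (\sum_(i <- r | p i) u i) v = \sum_(i <- r | p i) dotv (u i) v.
Proof.
rewrite /dotv exchange_big; apply: eq_bigr => j _.
by rewrite summxE big_distrl.
Qed.

Lemma dotv0l (v : 'rV[R]_n) : dotv 0 v = 0.
Proof. by rewrite /dotv big1 // => i _; rewrite mxE mul0r. Qed.

End DotProduct.

Lemma weighted_dev_sum0 (R : fieldType) (V : lmodType R) (I J : finType)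
    (A : pred I) (w : I -> J -> R) (y : I -> J -> V) :
  \sum_(i in A) \sum_j w i j != 0 ->
  \sum_(i in A) \sum_j w i j *:
    (y i j - (\sum_(i in A) \sum_j w i j)^-1 *: \sum_(i in A) \sum_j w i j *: y i j)
  = 0.
Proof.
set W := \sum_(i in A) \sum_j w i j.
set Y := \sum_(i in A) \sum_j w i j *: y i j => W_neq0.
under eq_bigr => i _ do under eq_bigr => j _ do rewrite scalerBr.
under eq_bigr => i _ do rewrite sumrB; rewrite sumrB -/Y.
under eq_bigr => i _ do rewrite -scaler_suml.
by rewrite -scaler_suml -/W scalerA mulfV // scale1r subrr.
Qed.

Lemma block_pairing_eq0 (R : comRingType) (G K : finType) (d : nat)
    (P : {set {set G}}) (w : G -> K -> R) (mu Y : G -> K -> 'rV[R]_d) :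
  partition P [set: G] ->
  (forall g0, \sum_(g in pblock P g0) \sum_k w g k *: mu g k = 0) ->
  (forall g g' k k', g' \in pblock P g -> Y g k = Y g' k') ->
  \sum_g \sum_k w g k * dotv (mu g k) (Y g k) = 0.
Proof.
move=> partP mu_node0 Y_node; case/and3P: (partP) => _ tI _.
rewrite (eq_bigl (fun g => g \in [set: G])); last by move=> g; rewrite inE.
rewrite (set_partition_big _ partP) /=; apply: big1 => A PA.
case: (pickP (fun p : G * K => p.1 \in A)) => [[g0 k0] /= g0A | noA]; last first.
  rewrite big1 // => g gA; rewrite big1 // => k _.
  by move: (noA (g, k)); rewrite /= gA.
have A_def : pblock P g0 = A by apply: def_pblock.
transitivity (dotv (\sum_(g in A) \sum_k w g k *: mu g k) (Y g0 k0)).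
  rewrite dotv_suml; apply: eq_bigr => g gA; rewrite dotv_suml.
  by apply: eq_bigr => k _; rewrite dotvZl (Y_node g0 g k0 k) // A_def.
by rewrite -A_def mu_node0 dotv0l.
Qed.

Lemma lagr_obj_weighted_sum (R : comRingType) (T G K : finType) (n m : T -> nat)
    (sel : forall t, 'I_(m t) -> 'I_(n t)) (w : G -> K -> R)
    (c : forall t, G -> K -> 'rV[R]_(n t)) (mu : forall t, G -> K -> 'rV[R]_(m t))
    (x : G -> K -> decision R n) :
  (forall t, \sum_g \sum_k w g k * dotv (mu t g k) (invest (sel t) (x g k t)) = 0) ->
  \sum_g \sum_k w g k * lagr_obj sel (fun t => c t g k) (fun t => mu t g k) (x g k)
  = \sum_g \sum_k w g k * \sum_t dotv (c t g k) (x g k t).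
Proof.
move=> pairing0; rewrite /lagr_obj.
under eq_bigr => g _ do under eq_bigr => k _ do rewrite sumrB mulrBr.
under eq_bigr => g _ do rewrite sumrB.
rewrite sumrB [X in _ - X](_ : _ = 0) ?subr0 //.
under eq_bigr => g _ do under eq_bigr => k _ do rewrite big_distrr /=.
under eq_bigr => g _ do rewrite exchange_big /=.
by rewrite exchange_big big1.
Qed.

Section DualNodeSums.
Variables (R : realFieldType) (T G K : finType) (m : T -> nat).
Variables (P : T -> {set {set G}}) (piLT : G -> R) (piMS : K -> R).
Hypothesis HP : forall t, partition (P t) [set: G].
Hypothesis HpiLT : forall g, 0 < piLT g.
Hypothesis HpiMS1 : \sum_k piMS k = 1.

Lemma node_weight_neq0 t g0 :
  \sum_(g in pblock (P t) g0) \sum_k piLT g * piMS k != 0.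
Proof.
have g0_node : g0 \in pblock (P t) g0.
  by case/and3P: (HP t) => /eqP cov _ _; rewrite mem_pblock cov inE.
under eq_bigr => g _ do rewrite -big_distrr /= HpiMS1 mulr1.
rewrite (bigD1 g0) //=; apply/lt0r_neq0/ltr_pwDl; first exact: HpiLT.
by apply: sumr_ge0 => g _; apply/ltW.
Qed.

Lemma xbar_pblock (X : forall t, G -> K -> 'rV[R]_(m t)) t g0 g :
  g \in pblock (P t) g0 -> xbar P piLT piMS X t g = xbar P piLT piMS X t g0.
Proof.
by move=> g_node; rewrite /xbar (same_pblock _ g_node) //; case/and3P: (HP t).
Qed.

Lemma mu_seq_node_sum0 (rho : R) (Xs : nat -> forall t, G -> K -> 'rV[R]_(m t))
    nu t g0 :
  \sum_(g in pblock (P t) g0) \sum_k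
    (piLT g * piMS k) *: mu_seq P piLT piMS rho Xs nu t g k = 0.
Proof.
elim: nu => [|nu IH] /=.
  by rewrite big1 // => g _; rewrite big1 // => k _; rewrite scaler0.
transitivity (\sum_(g in pblock (P t) g0) \sum_k
    (piLT g * piMS k) *: mu_seq P piLT piMS rho Xs nu t g k
  + rho *: \sum_(g in pblock (P t) g0) \sum_k (piLT g * piMS k) *:
    (Xs nu.+1 t g k - xbar P piLT piMS (Xs nu.+1) t g0)).
  rewrite scaler_sumr -big_split; apply: eq_bigr => g g_node.
  rewrite scaler_sumr -big_split; apply: eq_bigr => k _.
  by rewrite (xbar_pblock _ g_node) scalerDr !scalerA [rho * _]mulrC.
by rewrite IH add0r /xbar weighted_dev_sum0 ?scaler0 ?node_weight_neq0.
Qed.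

End DualNodeSums.

Theorem theorem1 (R : realFieldType) (T G K : finType) (n m : T -> nat)
  (sel : forall t : T, 'I_(m t) -> 'I_(n t))
  (Hsel : forall t, injective (sel t))
  (P : T -> {set {set G}}) (HP : forall t, partition (P t) [set: G])
  (piLT : G -> R) (piMS : K -> R)
  (HpiLT : forall g, 0 < piLT g) (HpiLT1 : \sum_(g : G) piLT g = 1)
  (HpiMS : forall k, 0 < piMS k) (HpiMS1 : \sum_(k : K) piMS k = 1)
  (c : forall t : T, G -> K -> 'rV[R]_(n t))
  (Q : G -> K -> decision R n -> Prop)
  (zdot : R)
  (Hzdot : (exists x, orig_feasible sel P Q x /\ orig_obj piLT piMS c x = zdot) /\
           (forall x, orig_feasible sel P Q x -> orig_obj piLT piMS c x <= zdot))
  (rho : R) (Hrho : 0 < rho)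
  (Xs : nat -> forall t : T, G -> K -> 'rV[R]_(m t))
  (HX : forall (nu : nat) (g : G) (k : K), exists x : decision R n,
     [/\ Q g k x,
         (forall y, Q g k y ->
            aug_obj sel rho (fun t => c t g k)
              (fun t => mu_seq P piLT piMS rho Xs nu t g k)
              (fun t => Xs nu t g k) y
            <= aug_obj sel rho (fun t => c t g k)
              (fun t => mu_seq P piLT piMS rho Xs nu t g k)
              (fun t => Xs nu t g k) x) &
         (forall t, Xs nu.+1 t g k = invest (sel t) (x t))])
  (D : nat -> G -> K -> R)
  (HD : forall (nu : nat) (g : G) (k : K),
     (exists x, Q g k x /\
        lagr_obj sel (fun t => c t g k)
          (fun t => mu_seq P piLT piMS rho Xs nu.+1 t g k) x = D nu g k) /\
     (forall x, Q g k x ->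
        lagr_obj sel (fun t => c t g k)
          (fun t => mu_seq P piLT piMS rho Xs nu.+1 t g k) x <= D nu g k)) :
  forall nu : nat,
    zdot <= \sum_(g : G) \sum_(k : K) piLT g * piMS k * D nu g k.
Proof.
move=> nu; case: Hzdot => [[x [[xQ x_nonant] <-]] _].
set mu := mu_seq P piLT piMS rho Xs nu.+1.
have pairing0 t : \sum_g \sum_k piLT g * piMS k *
    dotv (mu t g k) (invest (sel t) (x g k t)) = 0.
  apply: (block_pairing_eq0 (HP t)) => [g0 | g g' k k'].
    exact: mu_seq_node_sum0.
  exact: x_nonant.
rewrite /orig_obj -(lagr_obj_weighted_sum c pairing0).
apply: ler_sum => g _; apply: ler_sum => k _.
rewrite ler_pM2l ?mulr_gt0 //.
exact: (proj2 (HD nu g k) _ (xQ g k)).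
Qed.
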